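(* Let $D$ be a directed acyclic graph, let $M_1,M_2$ be disjoint sets of vertices of $D$, and let $Z$ be a set of vertices of $D$. If (a) $M_1\cup M_2\cup \bigl(V(D)-(\mathrm{Out}(M_1)\cup \mathrm{In}(M_1)\cup \mathrm{In}(M_2))\bigr)$ is an independent set, (b) $\mathrm{Out}(M_1)\subseteq Z$, (c) $Z\cap \mathrm{In}(M_1)=M_1$, and (d) $Z\cap \mathrm{In}(M_2)=\emptyset$, then $Z$ is a closed set.
   Context: For a set $X$ of vertices of a digraph $D$: $\mathrm{Out}(X)$ is the set of vertices $y$ such that there is a directed path (possibly of length $0$) from a vertex of $X$ to $y$, and $\mathrm{In}(X)$ is the set of vertices $y$ such that there is a directed path (possibly of length $0$) from $y$ to a vertex of $X$. A set $X$ is independent if the induced subgraph $D[X]$ has no arcs, and closed if $D$ has no arc from a vertex of $X$ to a vertex outside $X$. *)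

From mathcomp Require Import all_boot.
Set Implicit Arguments. Unset Strict Implicit. Unset Printing Implicit Defensive.

(* A digraph D is given by a finite vertex type T and an arc relation e : rel T
   (e x y means there is an arc x -> y). *)

Definition acyclic (T : finType) (e : rel T) : Prop :=
  forall x y, e x y -> ~~ connect e y x.

Definition Out (T : finType) (e : rel T) (X : {set T}) : {set T} :=
  [set y | [exists x in X, connect e x y]].

Definition In (T : finType) (e : rel T) (X : {set T}) : {set T} :=
  [set y | [exists x in X, connect e y x]].

Definition independent (T : finType) (e : rel T) (X : {set T}) : Prop :=
  forall x y, x \in X -> y \in X -> ~~ e x y.

Definition closed_set (T : finType) (e : rel T) (X : {set T}) : Prop :=
  forall x y, x \in X -> e x y -> y \in X.

From mathcomp Require Import all_boot.

Set Implicit Arguments.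
Unset Strict Implicit.
Unset Printing Implicit Defensive.

(* Let x -> y be an arc with x in Z.  If x lies in Out(M1), so does y, hence y
   is in Z.  Otherwise (c) and (d) show that x avoids In(M1) and In(M2), and so
   does its successor y; if y also avoids Out(M1), both x and y lie in the
   independent set of (a), which is impossible. *)

Section Reachability.

Variables (T : finType) (e : rel T).

Lemma Out_closed (X : {set T}) : closed_set e (Out e X).
Proof.
move=> x y; rewrite !inE => /exists_inP [w wX cwx] exy.
by apply/exists_inP; exists w => //; apply: connect_trans cwx (connect1 exy).
Qed.

Lemma sub_Out (X : {set T}) : X \subset Out e X.
Proof. by apply/subsetP => x xX; rewrite inE; apply/exists_inP; exists x. Qed.

Lemma In_compl_closed (X : {set T}) : closed_set e (~: In e X).
Proof.
move=> x y; rewrite !inE => /negP xNIn exy.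
apply/negP => /exists_inP [w wX cyw]; apply: xNIn.
by apply/exists_inP; exists w => //; apply: connect_trans (connect1 exy) cyw.
Qed.

End Reachability.

Theorem lemma5p3 (T : finType) (e : rel T) (M1 M2 Z : {set T}) :
  acyclic e ->
  [disjoint M1 & M2] ->
  independent e (M1 :|: M2 :|: ~: (Out e M1 :|: In e M1 :|: In e M2)) ->
  Out e M1 \subset Z ->
  Z :&: In e M1 = M1 ->
  Z :&: In e M2 = set0 ->
  closed_set e Z.
Proof.
move=> _ _ indep OutZ ZIn1 ZIn2 x y xZ exy.
have [xO | xNO] := boolP (x \in Out e M1).
  by apply: (subsetP OutZ); apply: Out_closed exy.
have [yO | yNO] := boolP (y \in Out e M1); first exact: (subsetP OutZ).
have xNIn1 : x \in ~: In e M1.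
  rewrite in_setC; apply: (contra _ xNO) => xIn.
  by apply: (subsetP (sub_Out e M1)); rewrite -ZIn1 inE xZ.
have xNIn2 : x \in ~: In e M2.
  rewrite in_setC; apply/negP => xIn.
  by have := in_set0 x; rewrite -ZIn2 inE xZ xIn.
have yNIn1 : y \in ~: In e M1 by apply: In_compl_closed exy.
have yNIn2 : y \in ~: In e M2 by apply: In_compl_closed exy.
have in_indep v : v \notin Out e M1 -> v \in ~: In e M1 -> v \in ~: In e M2 ->
    v \in M1 :|: M2 :|: ~: (Out e M1 :|: In e M1 :|: In e M2).
  rewrite !in_setC in_setU in_setC !in_setU.
  by move=> /negbTE-> /negbTE-> /negbTE->; rewrite orbT.
have := indep x y (in_indep x xNO xNIn1 xNIn2) (in_indep y yNO yNIn1 yNIn2).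
by rewrite exy.
Qed.
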